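(* Let $\theta>1$ and $\lambda>1$ be real numbers. For $N\ge 2$ and $1\le r\le N-1$ let \[ P_r(N,\theta)=\frac{r(1-\theta)\sum_{i=r}^{N-1}\frac{\theta^i}{i}}{1-\theta^N}, \] the probability of winning the weighted game of best choice on $N$ candidates with the strategy rejecting $r$ initial candidates. Then, with $r=N/\lambda$, \[ \lim_{N\to\infty} P_{N/\lambda}(N,\theta)=\frac{1}{\lambda}. \]
   Context: In the weighted game of best choice, a permutation $\pi$ of $\{1,\dots,N\}$ is drawn with probability proportional to $\theta^{\pi^{-1}(N)-1}$ (where $\pi^{-1}(N)$ is the position of the best candidate $N$); the player rejects the first $r$ candidates and then accepts the next candidate better than all previous ones, winning if that candidate is $N$. Here $N/\lambda$ is to be understood as an integer number of rejected candidates (e.g. taking $N$ along values for which it is an integer, or rounding). *)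

From Stdlib Require Import Reals List.
From Coquelicot Require Import Coquelicot.
Open Scope R_scope.

(* sum_{i=r}^{N-1} theta^i / i  (empty when r > N-1) *)
Definition wsum (r N : nat) (theta : R) : R :=
  fold_right Rplus 0 (map (fun i => theta ^ i / INR i) (seq r (N - r))).

Definition P_win (r N : nat) (theta : R) : R :=
  INR r * (1 - theta) * wsum r N theta / (1 - theta ^ N).

(** The rejection window [r, N) has length about N (1 - 1/λ) while the weights
    θ^i grow geometrically, so the sum Σ_{i=r}^{N-1} θ^i / i is dominated by its
    last O(1) terms, where 1/i is within O(1/N²) of 1/N.  Precisely,
    θ^i ≤ N θ^i / i and r N / i ≤ r + (N - i) on [r, N]; summing the geometric
    series Σ θ^i and Σ (N - i) θ^i squeezes P_r(N, θ) between
    (r/N)(1 - θ^{-(N-r)}) and r/N + θ²/((θ-1)² N), and both bounds tend to 1/λ. *)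
From Stdlib Require Import Reals List Lra Lia.
From Coquelicot Require Import Coquelicot.
Open Scope R_scope.

Definition sum_range (f : nat -> R) (a m : nat) : R :=
  fold_right Rplus 0 (map f (seq a m)).

Lemma sum_range_succ f a m :
  sum_range f a (S m) = sum_range f a m + f (a + m)%nat.
Proof.
  unfold sum_range. rewrite seq_S, map_app, fold_right_app. simpl.
  induction (map f (seq a m)) as [|x l IH]; simpl; [|rewrite IH]; lra.
Qed.

Lemma sum_range_ext f g a m :
  (forall i, f i = g i) -> sum_range f a m = sum_range g a m.
Proof. intros Hfg. unfold sum_range. f_equal. now apply map_ext. Qed.

Lemma sum_range_le f g a m :
  (forall i, (a <= i < a + m)%nat -> f i <= g i) ->
  sum_range f a m <= sum_range g a m.
Proof.
  induction m as [|m IH]; intros Hfg; [unfold sum_range; simpl; lra|].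
  rewrite !sum_range_succ.
  apply Rplus_le_compat; [apply IH | apply Hfg]; intros; try apply Hfg; lia.
Qed.

Lemma sum_range_plus f g a m :
  sum_range (fun i => f i + g i) a m = sum_range f a m + sum_range g a m.
Proof.
  induction m as [|m IH]; [unfold sum_range; simpl; lra|].
  rewrite !sum_range_succ, IH. lra.
Qed.

Lemma sum_range_scal c f a m :
  sum_range (fun i => c * f i) a m = c * sum_range f a m.
Proof.
  induction m as [|m IH]; [unfold sum_range; simpl; lra|].
  rewrite !sum_range_succ, IH. lra.
Qed.

Lemma sum_range_geom x a m :
  (x - 1) * sum_range (pow x) a m = x ^ (a + m) - x ^ a.
Proof.
  induction m as [|m IH]; [unfold sum_range; simpl; rewrite Nat.add_0_r; lra|].
  rewrite sum_range_succ, Rmult_plus_distr_l, IH, Nat.add_succ_r. simpl. lra.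
Qed.

Lemma sum_range_weighted_geom_le x a m : 1 < x ->
  (x - 1) ^ 2 * sum_range (fun i => (INR (a + m) - INR i) * x ^ i) a m
  <= x ^ S (a + m).
Proof.
  intros Hx. induction m as [|m IH].
  - unfold sum_range; simpl. assert (0 < x ^ (a + 0)) by (apply pow_lt; lra). nra.
  - rewrite sum_range_succ, Nat.add_succ_r, S_INR.
    rewrite (sum_range_ext _ (fun i => (INR (a + m) - INR i) * x ^ i + x ^ i))
      by (intros i; ring).
    rewrite sum_range_plus.
    pose proof (sum_range_geom x a m) as Hgeom.
    assert (Hxa : 0 < x ^ a) by (apply pow_lt; lra).
    simpl in *. nra.
Qed.

Section WeightedSum.

Variable theta : R.
Hypothesis Htheta : 1 < theta.

Lemma wsum_shift r m :
  wsum r (m + r) theta = sum_range (fun i => theta ^ i / INR i) r m.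
Proof. unfold wsum, sum_range. now replace (m + r - r)%nat with m by lia. Qed.

Lemma wsum_lower r N : (1 <= r <= N)%nat ->
  theta ^ N - theta ^ r <= INR N * (theta - 1) * wsum r N theta.
Proof.
  intros Hr. destruct (Nat.le_exists_sub r N) as [m [-> _]]; [lia|].
  rewrite wsum_shift, Nat.add_comm, <- sum_range_geom.
  replace (INR (r + m) * (theta - 1) * _) with
    ((theta - 1) * (INR (r + m) * sum_range (fun i => theta ^ i / INR i) r m)) by ring.
  rewrite <- (sum_range_scal (INR (r + m))).
  apply Rmult_le_compat_l; [lra|].
  apply sum_range_le. intros i Hi.
  assert (Hi0 : 0 < INR i) by (apply lt_0_INR; lia).
  assert (HiN : INR i <= INR (r + m)) by (apply le_INR; lia).
  assert (Ht : 0 <= theta ^ i / INR i)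
    by (apply Rdiv_le_0_compat; [left; apply pow_lt|]; lra).
  replace (theta ^ i) with (INR i * (theta ^ i / INR i)) at 1 by (field; lra).
  now apply Rmult_le_compat_r.
Qed.

Lemma wsum_upper r N : (1 <= r <= N)%nat ->
  INR r * INR N * (theta - 1) * wsum r N theta
  <= INR r * (theta ^ N - theta ^ r) + theta ^ S N / (theta - 1).
Proof.
  intros Hr. destruct (Nat.le_exists_sub r N) as [m [-> _]]; [lia|].
  rewrite wsum_shift, Nat.add_comm.
  set (W := sum_range (fun i => (INR (r + m) - INR i) * theta ^ i) r m).
  assert (HW : (theta - 1) * W <= theta ^ S (r + m) / (theta - 1)).
  { apply (Rmult_le_reg_l (theta - 1)); [lra|].
    replace ((theta - 1) * (theta ^ S (r + m) / (theta - 1))) with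
      (theta ^ S (r + m)) by (field; lra).
    replace ((theta - 1) * ((theta - 1) * W)) with ((theta - 1) ^ 2 * W) by ring.
    now apply sum_range_weighted_geom_le. }
  assert (Hsum : INR r * INR (r + m) * sum_range (fun i => theta ^ i / INR i) r m
                 <= INR r * sum_range (pow theta) r m + W).
  { unfold W. rewrite <- !sum_range_scal, <- sum_range_plus. apply sum_range_le. intros i Hi.
    assert (Hi0 : 0 < INR i) by (apply lt_0_INR; lia).
    assert (HiN : INR i <= INR (r + m)) by (apply le_INR; lia).
    assert (Hri : INR r <= INR i) by (apply le_INR; lia).
    assert (Hti : 0 < theta ^ i) by (apply pow_lt; lra).
    (* r N / i <= r + (N - i) on [r, N], as (N - i) (r - i) <= 0 *)
    assert (Hpt : INR r * INR (r + m) <= INR i * (INR r + (INR (r + m) - INR i))) by nra.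
    apply (Rmult_le_reg_r (INR i / theta ^ i)); [apply Rdiv_lt_0_compat; lra|].
    replace (INR r * INR (r + m) * (theta ^ i / INR i) * (INR i / theta ^ i))
      with (INR r * INR (r + m)) by (field; lra).
    replace ((INR r * theta ^ i + (INR (r + m) - INR i) * theta ^ i) * (INR i / theta ^ i))
      with (INR i * (INR r + (INR (r + m) - INR i))) by (field; lra).
    exact Hpt. }
  rewrite <- (sum_range_geom theta r m).
  nra.
Qed.

Lemma P_win_lower r N : (1 <= r <= N)%nat ->
  INR r / INR N * (1 - / theta ^ (N - r)) <= P_win r N theta.
Proof.
  intros Hr. pose proof (wsum_lower r N Hr) as Hs.
  unfold P_win. set (s := wsum r N theta) in *.
  assert (HN : 0 < INR N) by (apply lt_0_INR; lia).
  assert (HX : theta <= theta ^ N) by (rewrite <- pow_1 at 1; apply Rle_pow; lra || lia).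
  assert (HY : 0 < theta ^ r) by (apply pow_lt; lra).
  assert (HYX : theta ^ r <= theta ^ N) by (apply Rle_pow; lra || lia).
  assert (Hsplit : theta ^ N = theta ^ r * theta ^ (N - r))
    by (rewrite <- pow_add; f_equal; lia).
  replace (INR r / INR N * (1 - / theta ^ (N - r))) with
    (INR r / INR N * ((theta ^ N - theta ^ r) / theta ^ N))
    by (assert (0 < theta ^ (N - r)) by (apply pow_lt; lra);
        rewrite Hsplit; field; repeat split; lra).
  replace (INR r * (1 - theta) * s / (1 - theta ^ N)) with
    (INR r / INR N * (INR N * (theta - 1) * s / (theta ^ N - 1))) by (field; lra).
  apply Rmult_le_compat_l; [apply Rdiv_le_0_compat; [apply pos_INR | lra]|].
  apply Rle_trans with ((theta ^ N - theta ^ r) / (theta ^ N - 1)).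
  - apply Rmult_le_compat_l; [lra|]. apply Rinv_le_contravar; lra.
  - apply Rmult_le_compat_r; [left; apply Rinv_0_lt_compat; lra | exact Hs].
Qed.

Lemma P_win_upper r N : (1 <= r <= N)%nat ->
  P_win r N theta <= INR r / INR N + theta ^ 2 / (theta - 1) ^ 2 / INR N.
Proof.
  intros Hr. pose proof (wsum_upper r N Hr) as Hs.
  unfold P_win. set (s := wsum r N theta) in *.
  assert (HN : 0 < INR N) by (apply lt_0_INR; lia).
  assert (Hr1 : 1 <= INR r) by (apply (le_INR 1); lia).
  assert (HX : theta <= theta ^ N) by (rewrite <- pow_1 at 1; apply Rle_pow; lra || lia).
  assert (HY : 1 <= theta ^ r) by (apply pow_R1_Rle; lra).
  simpl in Hs. set (X := theta ^ N) in *.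
  replace (INR r * (1 - theta) * s / (1 - X)) with
    (INR r * INR N * (theta - 1) * s / (INR N * (X - 1))) by (field; lra).
  apply Rle_trans with ((INR r * (X - theta ^ r) + theta * X / (theta - 1)) / (INR N * (X - 1))).
  { apply Rmult_le_compat_r; [left; apply Rinv_0_lt_compat; nra | exact Hs]. }
  (* r (X - θ^r) <= r (X - 1), and θ X / (X - 1) <= θ^2 / (θ - 1) since X >= θ *)
  apply (Rmult_le_reg_r (INR N * (X - 1) * (theta - 1) ^ 2)).
  { apply Rmult_lt_0_compat; [apply Rmult_lt_0_compat | apply pow_lt]; lra. }
  replace ((INR r * (X - theta ^ r) + theta * X / (theta - 1)) / (INR N * (X - 1))
           * (INR N * (X - 1) * (theta - 1) ^ 2))
    with (INR r * (X - theta ^ r) * (theta - 1) ^ 2 + theta * X * (theta - 1)) by (field; nra).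
  replace ((INR r / INR N + theta ^ 2 / (theta - 1) ^ 2 / INR N)
           * (INR N * (X - 1) * (theta - 1) ^ 2))
    with (INR r * (X - 1) * (theta - 1) ^ 2 + theta ^ 2 * (X - 1)) by (field; lra).
  assert (0 <= INR r * (theta - 1) ^ 2 * (theta ^ r - 1))
    by (apply Rmult_le_pos; [apply Rmult_le_pos; [lra | apply pow_le; lra] | lra]).
  assert (0 <= theta * (X - theta)) by (apply Rmult_le_pos; lra).
  nra.
Qed.

End WeightedSum.

Lemma eventually_INR_gt (c : R) : eventually (fun N => c < INR N).
Proof. apply is_lim_seq_INR. now exists c. Qed.

Lemma is_lim_seq_inv_INR : is_lim_seq (fun N => / INR N) 0.
Proof. apply (is_lim_seq_inv INR p_infty); [apply is_lim_seq_INR | discriminate]. Qed.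

Lemma Rinv_in_unit_interval x : 1 < x -> 0 < / x < 1.
Proof.
  intros Hx. split; [apply Rinv_0_lt_compat; lra|].
  rewrite <- Rinv_1. apply Rinv_lt_contravar; lra.
Qed.

Section RankSequence.

Variables (r : nat -> nat) (c K : R).
Hypothesis Hdev : forall N, Rabs (INR (r N) - INR N * c) <= K.

Lemma rank_bounds N : INR N * c - K <= INR (r N) <= INR N * c + K.
Proof. specialize (Hdev N). apply Rabs_le_between in Hdev. lra. Qed.

Lemma rank_ratio_lim : is_lim_seq (fun N => INR (r N) / INR N) c.
Proof.
  apply is_lim_seq_le_le_loc with (u := fun N => c - K * / INR N)
    (w := fun N => c + K * / INR N).
  - destruct (eventually_INR_gt 0) as [M HM]. exists M. intros N HN.
    specialize (HM N HN). pose proof (rank_bounds N).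
    replace (INR (r N) / INR N) with (c + (INR (r N) - INR N * c) * / INR N)
      by (field; lra).
    assert (0 < / INR N) by (apply Rinv_0_lt_compat; lra).
    split; apply Rplus_le_compat_l; [|apply Rmult_le_compat_r; lra].
    rewrite Ropp_mult_distr_l. apply Rmult_le_compat_r; lra.
  - replace c with (c - K * 0) at 1 by ring.
    apply is_lim_seq_minus'; [apply is_lim_seq_const|].
    apply is_lim_seq_mult'; [apply is_lim_seq_const | apply is_lim_seq_inv_INR].
  - replace c with (c + K * 0) at 1 by ring.
    apply is_lim_seq_plus'; [apply is_lim_seq_const|].
    apply is_lim_seq_mult'; [apply is_lim_seq_const | apply is_lim_seq_inv_INR].
Qed.

Lemma rank_gap_tends_to_infinity : c < 1 ->
  filterlim (fun N => (N - r N)%nat) eventually eventually.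
Proof.
  intros Hc P [M HM].
  destruct (eventually_INR_gt ((INR M + K) / (1 - c))) as [N0 HN0].
  exists N0. intros N HN. apply HM.
  specialize (HN0 N HN). pose proof (rank_bounds N).
  assert (Hgap : INR M < INR N - INR (r N)).
  { apply (Rmult_lt_compat_r (1 - c)) in HN0; [|lra].
    replace ((INR M + K) / (1 - c) * (1 - c)) with (INR M + K) in HN0 by (field; lra).
    lra. }
  assert (Hlt : (r N < N)%nat) by (apply INR_lt; pose proof (pos_INR M); lra).
  apply INR_le. rewrite minus_INR by lia. lra.
Qed.

Lemma rank_gap_geom_decay theta : c < 1 -> 1 < theta ->
  is_lim_seq (fun N => / theta ^ (N - r N)) 0.
Proof.
  intros Hc Htheta.
  apply (is_lim_seq_ext (fun N => (/ theta) ^ (N - r N))); [intros; apply pow_inv|].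
  apply (is_lim_seq_subseq (fun k => (/ theta) ^ k)).
  - now apply rank_gap_tends_to_infinity.
  - apply is_lim_seq_geom. destruct (Rinv_in_unit_interval theta Htheta).
    rewrite Rabs_pos_eq; lra.
Qed.

Lemma eventually_rank_in_range : 0 < c < 1 ->
  eventually (fun N => (1 <= r N <= N)%nat).
Proof.
  intros Hc.
  destruct (eventually_INR_gt ((1 + K) / c + K / (1 - c))) as [N0 HN0].
  exists N0. intros N HN.
  specialize (HN0 N HN). pose proof (rank_bounds N).
  assert (HK : 0 <= K) by (eapply Rle_trans; [apply Rabs_pos | apply (Hdev 0)]).
  assert (Hlo : (1 + K) / c <= INR N)
    by (assert (0 <= K / (1 - c)) by (apply Rdiv_le_0_compat; lra); lra).
  assert (Hhi : K / (1 - c) <= INR N)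
    by (assert (0 <= (1 + K) / c) by (apply Rdiv_le_0_compat; lra); lra).
  apply (Rmult_le_compat_r c) in Hlo; [|lra].
  apply (Rmult_le_compat_r (1 - c)) in Hhi; [|lra].
  replace ((1 + K) / c * c) with (1 + K) in Hlo by (field; lra).
  replace (K / (1 - c) * (1 - c)) with K in Hhi by (field; lra).
  split; apply INR_le; simpl; lra.
Qed.

End RankSequence.

Theorem theorem3p3 (theta lambda : R) (r : nat -> nat) :
  1 < theta -> 1 < lambda ->
  (forall N : nat, Rabs (INR (r N) - INR N / lambda) < 1) ->
  is_lim_seq (fun N : nat => P_win (r N) N theta) (1 / lambda).
Proof.
  intros Htheta Hlambda Hr.
  assert (Hc : 0 < 1 / lambda < 1)
    by (unfold Rdiv; rewrite Rmult_1_l; now apply Rinv_in_unit_interval).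
  assert (Hdev : forall N, Rabs (INR (r N) - INR N * (1 / lambda)) <= 1)
    by (intros N; apply Rlt_le; now replace (INR N * (1 / lambda)) with (INR N / lambda)
          by (field; lra)).
  pose proof (rank_ratio_lim r _ _ Hdev) as Hratio.
  pose proof (rank_gap_geom_decay r _ _ Hdev theta (proj2 Hc) Htheta) as Hdecay.
  apply is_lim_seq_le_le_loc with
    (u := fun N => INR (r N) / INR N * (1 - / theta ^ (N - r N)))
    (w := fun N => INR (r N) / INR N + theta ^ 2 / (theta - 1) ^ 2 * / INR N).
  - apply (filter_imp _ _ (fun N HN => conj (P_win_lower theta Htheta (r N) N HN)
                                          (P_win_upper theta Htheta (r N) N HN))).
    now apply (eventually_rank_in_range r _ _ Hdev).
  - replace (1 / lambda) with (1 / lambda * (1 - 0)) by ring.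
    apply is_lim_seq_mult'; [exact Hratio|].
    apply is_lim_seq_minus'; [apply is_lim_seq_const | exact Hdecay].
  - replace (1 / lambda) with (1 / lambda + theta ^ 2 / (theta - 1) ^ 2 * 0) by ring.
    apply is_lim_seq_plus'; [exact Hratio|].
    apply is_lim_seq_mult'; [apply is_lim_seq_const | apply is_lim_seq_inv_INR].
Qed.
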